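(* Let $X=\{x_1,\dots,x_n\}$ be a finite biquandle and let $K_1,K_2$ be virtual knotoid diagrams. Then for all $i,k\in\{1,\dots,n\}$, \[\Phi_{X_{ik}}^{\mathbb{Z}}(K_1K_2)=\sum_{j=1}^{n}\Phi_{X_{ij}}^{\mathbb{Z}}(K_1)\,\Phi_{X_{jk}}^{\mathbb{Z}}(K_2).\]
   Context: A virtual knotoid diagram is an immersed oriented open curve in $S^2$ (oriented from the tail endpoint to the head endpoint) with finitely many transversal double points, each a classical crossing (with over/under information) or a virtual crossing. Product: for virtual knotoid diagrams $K_1,K_2$ in $S^2$ with tails $t_1,t_2$ and heads $h_1,h_2$, let $U$ be a disk neighborhood of $h_1$ meeting $K_1$ in a radius and $V$ a disk neighborhood of $t_2$ meeting $K_2$ in a radius. $K_1K_2$ is obtained by gluing $S^2\setminus\mathrm{Int}(U)$ and $S^2\setminus\mathrm{Int}(V)$ along a homeomorphism $\partial U\to\partial V$ sending the point $K_1\cap\partial U$ to $K_2\cap\partial V$; it is a virtual knotoid diagram in $S^2$ with tail $t_1$ and head $h_2$. A biquandle is a set $X$ with binary operations $\underline{\triangleright},\overline{\triangleright}$ such that for all $x,y,z$: $x\underline{\triangleright}x=x\overline{\triangleright}x$; the maps $x\mapsto x\overline{\triangleright}y$, $x\mapsto x\underline{\triangleright}y$ and $(x,y)\mapsto(y\overline{\triangleright}x,\,x\underline{\triangleright}y)$ are invertible; and $(x\underline{\triangleright}y)\underline{\triangleright}(z\underline{\triangleright}y)=(x\underline{\triangleright}z)\underline{\triangleright}(y\overline{\triangleright}z)$,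 $(x\underline{\triangleright}y)\overline{\triangleright}(z\underline{\triangleright}y)=(x\overline{\triangleright}z)\underline{\triangleright}(y\overline{\triangleright}z)$, $(x\overline{\triangleright}y)\overline{\triangleright}(z\overline{\triangleright}y)=(x\overline{\triangleright}z)\overline{\triangleright}(y\underline{\triangleright}z)$. Semi-arcs are the pieces into which crossings cut the curve; the tail (head) semi-arc contains the tail (head). An $X$-coloring assigns an element of $X$ to each semi-arc such that at each classical crossing, drawn with both strands oriented upward, incoming lower-left and lower-right colors $x,y$ give outgoing upper-left and upper-right colors $y\overline{\triangleright}x$ and $x\underline{\triangleright}y$, and at virtual crossings colors pass through unchanged. An $X_{ij}$-coloring is an $X$-coloring with tail semi-arc colored $x_i$ and head semi-arc colored $x_j$; $\Phi_{X_{ij}}^{\mathbb{Z}}(K)$ denotes the number of $X_{ij}$-colorings of $K$. *)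

From mathcomp Require Import all_boot.
Set Implicit Arguments. Unset Strict Implicit. Unset Printing Implicit Defensive.

(* bq_u x y = x \underline{\triangleright} y,  bq_o x y = x \overline{\triangleright} y *)
Record biquandle (X : Type) := Biquandle {
  bq_u : X -> X -> X;
  bq_o : X -> X -> X;
  bq_idem : forall x, bq_u x x = bq_o x x;
  bq_inv_o : forall y, bijective (fun x => bq_o x y);
  bq_inv_u : forall y, bijective (fun x => bq_u x y);
  bq_inv_S : bijective (fun p : X * X => (bq_o p.2 p.1, bq_u p.1 p.2));
  bq_ax1 : forall x y z,
    bq_u (bq_u x y) (bq_u z y) = bq_u (bq_u x z) (bq_o y z);
  bq_ax2 : forall x y z,
    bq_o (bq_u x y) (bq_u z y) = bq_u (bq_o x z) (bq_o y z);
  bq_ax3 : forall x y z,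
    bq_o (bq_o x y) (bq_o z y) = bq_o (bq_o x z) (bq_u y z)
}.

(* A virtual knotoid diagram is encoded by its (open) Gauss code: the
   sequence of classical-crossing passages met travelling from the tail to
   the head; letter (c, true) = passing crossing c as the over strand,
   (c, false) = passing it as the under strand.  gk_sign c = true iff
   crossing c is positive.  Virtual crossings carry no data. *)
Record gknotoid := GKnotoid {
  gk_word : seq (nat * bool);
  gk_sign : nat -> bool
}.

Definition gk_wf (K : gknotoid) : Prop :=
  forall c : nat,
    count_mem (c, true) (gk_word K) = count_mem (c, false) (gk_word K) /\
    count_mem (c, true) (gk_word K) <= 1.

(* Product K1 K2: concatenate Gauss codes, relabelling the crossings of K2
   so that they are disjoint from those of K1. *)
Definition gk_bound (K : gknotoid) : nat := (foldr maxn 0 (map fst (gk_word K))).+1.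

Definition gk_prod (K1 K2 : gknotoid) : gknotoid :=
  let N := gk_bound K1 in
  GKnotoid (gk_word K1 ++ map (fun l => (l.1 + N, l.2)) (gk_word K2))
           (fun c => if c < N then gk_sign K1 c else gk_sign K2 (c - N)).

(* Semi-arcs: with m = size (gk_word K) passages there are m+1 semi-arcs,
   semi-arc k lying between passage k-1 and passage k; semi-arc 0 is the tail
   semi-arc and semi-arc m the head semi-arc.  At a crossing c with over
   passage at position p and under passage at position q, the incoming colors
   are g p (over) and g q (under), the outgoing ones g p.+1 and g q.+1.
   Convention: at a positive crossing the over strand runs from lower-left to
   upper-right (both strands oriented upward); at a negative one the under
   strand does. Incoming lower-left x, lower-right y give upper-left
   y ▷̄ x and upper-right x ▷ y. *)
Definition crossing_ok (X : eqType) (B : biquandle X) (sgn : bool)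
    (overin overout underin underout : X) : bool :=
  if sgn then
    (* x = overin (lower-left), y = underin *)
    (overout == bq_u B overin underin) && (underout == bq_o B underin overin)
  else
    (* x = underin (lower-left), y = overin *)
    (underout == bq_u B underin overin) && (overout == bq_o B overin underin).

Definition is_coloring (X : finType) (B : biquandle X) (K : gknotoid)
    (f : {ffun 'I_(size (gk_word K)).+1 -> X}) : bool :=
  let w := gk_word K in
  let g := fun k : nat => f (inord k) in
  [forall p : 'I_(size w), forall q : 'I_(size w),
    let lp := nth (0, false) w p in
    let lq := nth (0, false) w q in
    (lp.2 && ~~ lq.2 && (lp.1 == lq.1)) ==>
      crossing_ok B (gk_sign K lp.1) (g p) (g p.+1) (g q) (g q.+1)].

Definition Phi (X : finType) (B : biquandle X) (xi xj : X) (K : gknotoid) : nat :=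
  #|[set f : {ffun 'I_(size (gk_word K)).+1 -> X} |
      @is_coloring X B K f && (f ord0 == xi) && (f ord_max == xj)]|.

From mathcomp Require Import all_boot.
Set Implicit Arguments. Unset Strict Implicit. Unset Printing Implicit Defensive.

(* The product word is the word of K1 followed by the relabelled word of K2, so
   no crossing of K1K2 involves letters of both factors: a map on semi-arcs is
   a coloring of K1K2 iff its restriction to the first size(K1)+1 semi-arcs
   colors K1 and its restriction to the last size(K2)+1 colors K2, the two
   pieces sharing the semi-arc at the gluing point.  Splitting a coloring there
   and recording the color xj of that semi-arc is a bijection onto pairs of
   colorings from xi to xj and from xj to xk. *)

Section Labelings.
Variable X : finType.
Implicit Types (m : nat) (g : nat -> X) (C : (nat -> X) -> bool).

Definition at_nat m (f : {ffun 'I_m.+1 -> X}) (k : nat) : X := f (inord k).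

Definition ffun_of m g : {ffun 'I_m.+1 -> X} := [ffun i : 'I_m.+1 => g i].

Definition shift n g : nat -> X := fun k => g (n + k).

Definition local_upto m C :=
  forall g g', (forall k, k <= m -> g k = g' k) -> C g = C g'.

Definition labelings m C (a b : X) :=
  [set f : {ffun 'I_m.+1 -> X} | C (at_nat f) && (f ord0 == a) && (f ord_max == b)].

Lemma at_nat_ord m (f : {ffun 'I_m.+1 -> X}) (i : 'I_m.+1) : at_nat f i = f i.
Proof. by rewrite /at_nat inord_val. Qed.

Lemma at_nat0 m (f : {ffun 'I_m.+1 -> X}) : at_nat f 0 = f ord0.
Proof. exact: (at_nat_ord f ord0). Qed.

Lemma at_nat_max m (f : {ffun 'I_m.+1 -> X}) : at_nat f m = f ord_max.
Proof. exact: (at_nat_ord f ord_max). Qed.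

Lemma at_nat_ffun_of m g k : k <= m -> at_nat (ffun_of m g) k = g k.
Proof. by move=> le_km; rewrite /at_nat ffunE inordK. Qed.

Lemma eq_labelings m C C' a b : C =1 C' -> labelings m C a b = labelings m C' a b.
Proof. by move=> eqC; apply/setP => f; rewrite !inE eqC. Qed.

Section Gluing.
Variables (n1 n2 : nat) (C1 C2 : (nat -> X) -> bool) (a b : X).
Hypotheses (C1_local : local_upto n1 C1) (C2_local : local_upto n2 C2).
Local Notation n := (n1 + n2).
Local Notation C := (fun g => C1 g && C2 (shift n1 g)).
Implicit Types (f : {ffun 'I_n.+1 -> X})
  (t : {ffun 'I_n1.+1 -> X} * {ffun 'I_n2.+1 -> X}).

Definition split_ffun f :=
  (ffun_of n1 (at_nat f), ffun_of n2 (shift n1 (at_nat f))).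

Definition glue_ffun t :=
  ffun_of n (fun k => if k <= n1 then at_nat t.1 k else at_nat t.2 (k - n1)).

Lemma split_ffunK : cancel split_ffun glue_ffun.
Proof.
move=> f; apply/ffunP => i; rewrite ffunE.
case: ifP => [le_i_n1 | /negbT]; first by rewrite at_nat_ffun_of ?at_nat_ord.
rewrite -ltnNge => lt_n1_i; have le_i_n : i <= n by rewrite -ltnS.
by rewrite at_nat_ffun_of ?leq_subLR // /shift subnKC ?at_nat_ord // ltnW.
Qed.

Lemma at_nat_glue_low t k : k <= n1 -> at_nat (glue_ffun t) k = at_nat t.1 k.
Proof.
by move=> le_k_n1; rewrite at_nat_ffun_of ?le_k_n1 // (leq_trans le_k_n1) ?leq_addr.
Qed.

Lemma at_nat_glue_high t k : t.1 ord_max = t.2 ord0 -> k <= n2 ->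
  at_nat (glue_ffun t) (n1 + k) = at_nat t.2 k.
Proof.
move=> glued le_k_n2; rewrite at_nat_ffun_of ?leq_add2l //.
case: k le_k_n2 => [|k] _; first by rewrite addn0 leqnn at_nat_max glued at_nat0.
by rewrite ifN ?addKn // -ltnNge addnS ltnS leq_addr.
Qed.

Lemma glue_ffunK t : t.1 ord_max = t.2 ord0 -> split_ffun (glue_ffun t) = t.
Proof.
case: t => t1 t2 /= glued; congr pair; apply/ffunP => i; rewrite ffunE.
  by rewrite at_nat_glue_low ?at_nat_ord // -ltnS.
by rewrite /shift (@at_nat_glue_high (t1, t2)) ?at_nat_ord // -ltnS.
Qed.

Lemma split_labelings j :
  split_ffun @: [set f in labelings n C a b | at_nat f n1 == j] =
  setX (labelings n1 C1 a j) (labelings n2 C2 j b).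
Proof.
apply/setP => t; apply/imsetP/idP => [[f] | ].
  rewrite !inE => /andP[/andP[/andP[/andP[Cf1 Cf2] /eqP f0] /eqP fmax] /eqP fn1] ->.
  rewrite !ffunE /= /shift addn0 fn1 at_nat0 f0 at_nat_max fmax !eqxx.
  rewrite (C1_local (g' := at_nat f)) => [|k le_k_n1]; last exact: at_nat_ffun_of.
  rewrite (C2_local (g' := shift n1 (at_nat f))) => [|k le_k_n2];
    last exact: at_nat_ffun_of.
  by rewrite Cf1 Cf2.
rewrite !inE => /andP[/andP[/andP[Ct1 /eqP t1_0] /eqP t1_max]].
move=> /andP[/andP[Ct2 /eqP t2_0] /eqP t2_max].
have glued : t.1 ord_max = t.2 ord0 by rewrite t1_max t2_0.
exists (glue_ffun t); last by rewrite glue_ffunK.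
rewrite !inE -at_nat0 -at_nat_max (at_nat_glue_high glued (leqnn n2)).
rewrite (at_nat_glue_low t (leq0n _)) (at_nat_glue_low t (leqnn _)).
rewrite at_nat0 !at_nat_max t1_0 t1_max t2_max !eqxx !andbT.
rewrite (C1_local (g' := at_nat t.1)) => [|k le_k_n1]; last exact: at_nat_glue_low.
rewrite (C2_local (g' := at_nat t.2)) => [|k le_k_n2]; last exact: at_nat_glue_high.
by rewrite Ct1 Ct2.
Qed.

Lemma card_labelings_cat :
  #|labelings n C a b| = \sum_(j : X) #|labelings n1 C1 a j| * #|labelings n2 C2 j b|.
Proof.
rewrite -sum1_card (partition_big (fun f => at_nat f n1) predT) //=.
apply: eq_bigr => j _; rewrite -cardsX -split_labelings card_imset; last first.
  exact: can_inj split_ffunK.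
by rewrite -sum1_card; apply: eq_bigl => f; rewrite !inE.
Qed.

End Gluing.
End Labelings.

Lemma forall_ord2P n (P : nat -> nat -> bool) :
  reflect (forall p q, p < n -> q < n -> P p q)
          [forall p : 'I_n, forall q : 'I_n, P p q].
Proof.
apply: (iffP forallP) => [PP p q lt_pn lt_qn | PP p].
  exact: (forallP (PP (Ordinal lt_pn)) (Ordinal lt_qn)).
by apply/forallP => q; apply: PP.
Qed.

Section Colorings.
Variables (X : finType) (B : biquandle X).
Implicit Types (K : gknotoid) (g : nat -> X).

Local Notation letter K p := (nth (0, false) (gk_word K) p).

Definition crossing_condition K g (p q : nat) : bool :=
  ((letter K p).2 && ~~ (letter K q).2 && ((letter K p).1 == (letter K q).1)) ==>
    crossing_ok B (gk_sign K (letter K p).1) (g p) (g p.+1) (g q) (g q.+1).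

Definition colors K g : bool :=
  [forall p : 'I_(size (gk_word K)), forall q : 'I_(size (gk_word K)),
     crossing_condition K g p q].

Lemma PhiE K (a b : X) m : size (gk_word K) = m ->
  Phi B a b K = #|labelings m (colors K) a b|.
Proof. by move=> <-. Qed.

Lemma colors_local K : local_upto (size (gk_word K)) (colors K).
Proof.
move=> g g' eq_gg'; apply: eq_forallb => p; apply: eq_forallb => q.
by rewrite /crossing_condition !eq_gg' // ltnW.
Qed.

Lemma crossing_condition_neq K g p q :
  (letter K p).1 != (letter K q).1 -> crossing_condition K g p q.
Proof. by move=> /negbTE neq_pq; rewrite /crossing_condition neq_pq andbF. Qed.

Lemma letter_lt_bound K p : p < size (gk_word K) -> (letter K p).1 < gk_bound K.
Proof.
rewrite /gk_bound; elim: (gk_word K) p => [|l w IHw] [|p] //= lt_pw; rewrite ltnS.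
  exact: leq_maxl.
by rewrite -ltnS (leq_trans (IHw p lt_pw)) // ltnS leq_maxr.
Qed.

Section Product.
Variables K1 K2 : gknotoid.
Local Notation K := (gk_prod K1 K2).
Local Notation n1 := (size (gk_word K1)).
Local Notation n2 := (size (gk_word K2)).
Local Notation N := (gk_bound K1).

Lemma size_prod_word : size (gk_word K) = n1 + n2.
Proof. by rewrite size_cat size_map. Qed.

Lemma letter_prod_low p : p < n1 -> letter K p = letter K1 p.
Proof. by move=> lt_p_n1; rewrite nth_cat lt_p_n1. Qed.

Lemma letter_prod_high p : p < n2 ->
  letter K (n1 + p) = (N + (letter K2 p).1, (letter K2 p).2).
Proof.
move=> lt_p_n2; rewrite nth_cat ltnNge leq_addr addKn (nth_map (0, false)) //=.
by rewrite addnC.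
Qed.

Lemma crossing_condition_prod_low g p q : p < n1 -> q < n1 ->
  crossing_condition K g p q = crossing_condition K1 g p q.
Proof.
move=> lt_p_n1 lt_q_n1.
by rewrite /crossing_condition !letter_prod_low //= letter_lt_bound.
Qed.

Lemma crossing_condition_prod_high g p q : p < n2 -> q < n2 ->
  crossing_condition K g (n1 + p) (n1 + q) = crossing_condition K2 (shift n1 g) p q.
Proof.
move=> lt_p_n2 lt_q_n2; rewrite /crossing_condition !letter_prod_high //= eqn_add2l.
by rewrite ltnNge leq_addr addKn -!addnS.
Qed.

Lemma letter_prod_lt_bound p : p < n1 + n2 -> ((letter K p).1 < N) = (p < n1).
Proof.
move=> lt_p_n; case: (ltnP p n1) => [lt_p_n1 | le_n1_p].
  by rewrite letter_prod_low // letter_lt_bound.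
rewrite -(subnKC le_n1_p) letter_prod_high ?ltn_subLR //=.
by rewrite ltnNge leq_addr.
Qed.

Lemma crossing_condition_prod_mixed g p q : p < n1 + n2 -> q < n1 + n2 ->
  (p < n1) != (q < n1) -> crossing_condition K g p q.
Proof.
move=> lt_p_n lt_q_n.
rewrite -(letter_prod_lt_bound lt_p_n) -(letter_prod_lt_bound lt_q_n) => neq_pq.
by apply: crossing_condition_neq; apply: contraNneq neq_pq => ->.
Qed.

Lemma colors_prod g : colors K g = colors K1 g && colors K2 (shift n1 g).
Proof.
rewrite /colors size_prod_word.
apply/forall_ord2P/andP => [Kg | [/forall_ord2P K1g /forall_ord2P K2g]].
  split; apply/forall_ord2P => p q lt_p lt_q.
    by rewrite -crossing_condition_prod_low ?Kg // ltn_addr.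
  by rewrite -crossing_condition_prod_high ?Kg // ltn_add2l.
move=> p q lt_p_n lt_q_n.
case: (ltnP p n1) => [lt_p_n1 | le_n1_p]; case: (ltnP q n1) => [lt_q_n1 | le_n1_q].
- by rewrite crossing_condition_prod_low ?K1g.
- by apply: crossing_condition_prod_mixed; rewrite // lt_p_n1 ltnNge le_n1_q.
- by apply: crossing_condition_prod_mixed; rewrite // lt_q_n1 ltnNge le_n1_p.
rewrite -(subnKC le_n1_p) -(subnKC le_n1_q) crossing_condition_prod_high ?K2g //.
all: by rewrite ltn_subLR.
Qed.

End Product.
End Colorings.

Theorem mainTheorem4 (X : finType) (B : biquandle X) (K1 K2 : gknotoid)
    (wf1 : gk_wf K1) (wf2 : gk_wf K2) (xi xk : X) :
  Phi B xi xk (gk_prod K1 K2) = \sum_(xj : X) Phi B xi xj K1 * Phi B xj xk K2.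
Proof.
rewrite (PhiE B xi xk (size_prod_word K1 K2)).
rewrite (eq_labelings _ _ _ (colors_prod B K1 K2)).
rewrite card_labelings_cat; [| exact: colors_local | exact: colors_local].
by apply: eq_bigr => xj _; rewrite !(PhiE B _ _ erefl).
Qed.
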